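(* Let $p_0>p_1>p_2\geq\ldots\geq p_N$ be reals in $[0,1]$ with $p_0-p_1=p_1-p_2$. Define $\mathbf{p}^0,\ldots,\mathbf{p}^N\in[0,1]^N$ by $\mathbf{p}^0_i=p_i$ for $1\le i\le N$, and for $1\le j\le N$, $\mathbf{p}^j_i=p_i$ ($i\ne j$), $\mathbf{p}^j_j=p_0$. Then for all $1\leq j\leq N$, $$\frac14H(\mathbf{p}^0)\leq H(\mathbf{p}^j)\leq 2H(\mathbf{p}^0).$$
   Context: For a vector $\mathbf{q}$ with a unique largest entry $q_{i^*}$, $H(\mathbf{q})=\sum_{i\neq i^*}(q_{i^*}-q_i)^{-2}$. Thus $H(\mathbf{p}^0)=\sum_{i\ge2}(p_1-p_i)^{-2}$ and $H(\mathbf{p}^j)=\sum_{i\ne j}(p_0-p_i)^{-2}$ for $j\ge1$. *)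

From mathcomp Require Import all_boot all_order all_algebra.
From mathcomp Require Import reals.
Set Implicit Arguments. Unset Strict Implicit. Unset Printing Implicit Defensive.
Import Order.TTheory GRing.Theory Num.Theory.
Local Open Scope ring_scope.

Definition unique_argmax (R : realType) (n : nat) (q : 'I_n -> R) (k : 'I_n) : bool :=
  [forall i, (i != k) ==> (q i < q k)].

(* H(q) = sum_{i <> i*} (q_{i*} - q_i)^{-2}, where i* is the index of the unique
   largest entry; (conventionally 0 if q has no unique largest entry, a case that
   never arises in the statement). *)
Definition H (R : realType) (n : nat) (q : 'I_n -> R) : R :=
  match [pick k | unique_argmax q k] with
  | Some k => \sum_(i < n | i != k) (q k - q i) ^- 2
  | None => 0
  end.

(* Vectors in [0,1]^N; coordinate i : 'I_N stands for the index i+1 in 1..N. *)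
Definition pvec0 (R : realType) (N : nat) (p : nat -> R) : 'I_N -> R :=
  fun i => p i.+1.

Definition pvec (R : realType) (N : nat) (p : nat -> R) (j : 'I_N) : 'I_N -> R :=
  fun i => if i == j then p 0%N else p i.+1.
Arguments pvec0 {R} N p i.

From mathcomp Require Import all_boot all_order all_algebra.
From mathcomp Require Import reals.
From mathcomp Require Import ring lra.
Set Implicit Arguments. Unset Strict Implicit. Unset Printing Implicit Defensive.
Import Order.TTheory GRing.Theory Num.Theory.
Local Open Scope ring_scope.

(* Write d = p_0 - p_1 = p_1 - p_2 and a_i = p_1 - p_i, so that every gap in
   H(p^0) is some a_i >= d, and every gap in H(p^j) is some d + a_i, except
   the gap d between p_0 and p_1 (for j <> 1).  Since d <= a_i, the term
   (d + a_i)^-2 lies between a_i^-2 / 4 and a_i^-2.  Summing termwise, the one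
   unmatched term d^-2 of H(p^j) dominates the missing a_j^-2 / 4 for the lower
   bound, and equals the term a_2^-2 of H(p^0) for the upper bound. *)

Section SumComparison.

Variables (R : numFieldType) (I : finType) (f g : I -> R) (k : I) (c : R).

Hypothesis f_ge0 : forall i, 0 <= f i.
Hypothesis g_ge0 : forall i, 0 <= g i.
Hypothesis f_k : f k = c.
Hypothesis g_le : forall i, i != k -> g i <= c.
Hypothesis f_le_g : forall i, i != k -> f i <= g i.
Hypothesis g_le_4f : forall i, i != k -> g i / 4 <= f i.

Lemma sum_quarter_le (j : I) :
  (\sum_(i | i != k) g i) / 4 <= \sum_(i | i != j) f i.
Proof.
rewrite mulr_suml; have [-> | jk] := eqVneq j k.
  by apply: ler_sum => i /g_le_4f.
rewrite [leLHS](bigD1 j) // [leRHS](bigD1 k) 1?eq_sym //= lerD //.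
  by rewrite f_k (le_trans _ (g_le jk)) // ler_pdivrMr // ler_peMr // ler1n.
rewrite [leRHS](eq_bigl (fun i => (i != k) && (i != j))) => [|i]; last by rewrite andbC.
by apply: ler_sum => i /andP[/g_le_4f].
Qed.

Lemma sum_le_twice (k' : I) : k' != k -> g k' = c ->
  forall j, \sum_(i | i != j) f i <= 2 * \sum_(i | i != k) g i.
Proof.
move=> k'k g_k' j.
have sum_f_le : \sum_(i | i != j) f i <= \sum_i f i.
  by rewrite [leRHS](bigD1 j) //= lerDr.
apply: le_trans sum_f_le _; rewrite (bigD1 k) //= mulr2n mulrDl mul1r lerD //.
  by rewrite f_k -g_k' (bigD1 k') //= lerDl sumr_ge0.
exact: ler_sum.
Qed.

End SumComparison.

Lemma le_invsq (R : numFieldType) (a b : R) : 0 < a -> a <= b -> b ^- 2 <= a ^- 2.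
Proof.
move=> a_gt0 ab; have b_gt0 := lt_le_trans a_gt0 ab.
by rewrite lef_pV2 ?posrE ?exprn_gt0 // ler_pXn2r // nnegrE ltW.
Qed.

Lemma invsq_ge0 (R : realFieldType) (a : R) : 0 <= a ^- 2.
Proof. by rewrite invr_ge0 exprn_even_ge0. Qed.

Lemma invsq_quarter_le (R : realFieldType) (a d : R) : 0 < d -> d <= a ->
  a ^- 2 / 4 <= (d + a) ^- 2.
Proof.
move=> d_gt0 da; have a_gt0 := lt_le_trans d_gt0 da.
have -> : a ^- 2 / 4 = (2 * a) ^- 2 by field; rewrite gt_eqF.
by apply: le_invsq; lra.
Qed.

Lemma H_argmaxE (R : realType) (n : nat) (q : 'I_n -> R) (k : 'I_n) :
  unique_argmax q k -> H q = \sum_(i < n | i != k) (q k - q i) ^- 2.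
Proof.
move=> argmax_k; rewrite /H; case: pickP => [k' argmax_k' | no_argmax]; last first.
  by rewrite no_argmax in argmax_k.
suff -> : k' = k by [].
apply/eqP/negPn/negP => k'k.
move/forallP/(_ k')/implyP/(_ k'k): argmax_k => lt_k'k.
move/forallP/(_ k)/implyP: argmax_k'; rewrite eq_sym => /(_ k'k) lt_kk'.
by have := lt_trans lt_k'k lt_kk'; rewrite ltxx.
Qed.

Section Gaps.

Variables (R : realType) (N : nat) (p : nat -> R).

Hypothesis p01 : p 1%N < p 0%N.
Hypothesis p12 : p 2%N < p 1%N.
Hypothesis p_noninc : forall i, (2 <= i)%N -> (i < N)%N -> p i.+1 <= p i.

Lemma p_le_p2 (m : nat) : (2 <= m)%N -> (m <= N)%N -> p m <= p 2%N.
Proof.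
elim: m => [//|m IHm]; rewrite leq_eqVlt => /orP[/eqP <- // | m_ge2 mN].
exact: le_trans (p_noninc m_ge2 mN) (IHm m_ge2 (ltnW mN)).
Qed.

Lemma p_succ_le_p2 (i : 'I_N) : i != 0%N :> nat -> p i.+1 <= p 2%N.
Proof. by move=> i0; apply: p_le_p2; [rewrite ltnS lt0n | exact: ltn_ord]. Qed.

Lemma p_succ_le_p1 (i : 'I_N) : p i.+1 <= p 1%N.
Proof.
have [-> // | i0] := eqVneq (val i) 0%N.
by apply: le_trans (p_succ_le_p2 i0) (ltW p12).
Qed.

Lemma H_pvec0 (k : 'I_N) : k = 0%N :> nat ->
  H (pvec0 N p) = \sum_(i < N | i != k) (p 1%N - p i.+1) ^- 2.
Proof.
move=> k0; have p_k : p k.+1 = p 1%N by rewrite k0.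
rewrite (@H_argmaxE _ _ _ k) /pvec0 /=; first by rewrite p_k.
apply/forallP => i; apply/implyP => ik; rewrite p_k.
have i0 : i != 0%N :> nat by rewrite -k0.
exact: le_lt_trans (p_succ_le_p2 i0) p12.
Qed.

Lemma H_pvec (j : 'I_N) :
  H (pvec p j) = \sum_(i < N | i != j) (p 0%N - p i.+1) ^- 2.
Proof.
rewrite (@H_argmaxE _ _ _ j) /pvec ?eqxx.
  by apply: eq_bigr => i /negPf ->.
apply/forallP => i; apply/implyP => /negPf ->; rewrite eqxx.
exact: le_lt_trans (p_succ_le_p1 i) p01.
Qed.

End Gaps.

Theorem lemma7 (R : realType) (N : nat) (p : nat -> R)
  (hN : (2 <= N)%N)
  (h01 : forall i, (i <= N)%N -> 0 <= p i <= 1)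
  (hp01 : p 1%N < p 0%N) (hp12 : p 2%N < p 1%N)
  (hmono : forall i, (2 <= i)%N -> (i < N)%N -> p i.+1 <= p i)
  (harith : p 0%N - p 1%N = p 1%N - p 2%N) :
  forall j : 'I_N,
    H (pvec0 N p) / 4 <= H (pvec p j) /\ H (pvec p j) <= 2 * H (pvec0 N p).
Proof.
move=> j; pose k0 : 'I_N := Ordinal (ltnW hN).
pose k1 : 'I_N := Ordinal hN.
rewrite (H_pvec0 hp12 hmono (k := k0)) // (H_pvec hp01 hp12 hmono).
have d_gt0 : 0 < p 0%N - p 1%N by lra.
have gap i : i != k0 -> p 0%N - p 1%N <= p 1%N - p i.+1.
  by move=> ik0; have := p_succ_le_p2 hmono ik0; lra.
have split_gap (i : 'I_N) : p 0%N - p i.+1 = (p 0%N - p 1%N) + (p 1%N - p i.+1).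
  by ring.
have g_le i : i != k0 -> (p 1%N - p i.+1) ^- 2 <= (p 0%N - p 1%N) ^- 2.
  by move=> /gap; apply: le_invsq.
have f_le_g i : i != k0 -> (p 0%N - p i.+1) ^- 2 <= (p 1%N - p i.+1) ^- 2.
  by move=> /gap ik0; rewrite split_gap; apply: le_invsq; lra.
have g_le_4f i : i != k0 -> (p 1%N - p i.+1) ^- 2 / 4 <= (p 0%N - p i.+1) ^- 2.
  by move=> /gap ik0; rewrite split_gap; apply: invsq_quarter_le.
split; first exact: sum_quarter_le (fun=> invsq_ge0 _) erefl g_le g_le_4f j.
apply: (sum_le_twice (fun=> invsq_ge0 _) (fun=> invsq_ge0 _) erefl f_le_g (k' := k1)) => //.
by rewrite /= -harith.
Qed.
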